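(* Let $\mathfrak F_3$ be the free group on $\{x,y,z\}$. Define the map $\Phi$ on vertices of the Farey tree $\mathrm{F}\mathbb T$ by $\Phi(r,t,s)=(\omega_r,\omega_t,\omega_s)\in\mathfrak F_3^3$ (each $\omega$ regarded as an element of $\mathfrak F_3$). Then $\Phi$ is an isomorphism of rooted planar binary trees from $\mathrm{F}\mathbb T$ onto the word tree $\mathrm{W}\mathbb T$; that is, $\Phi$ sends the root to the root and sends the left (resp. right) child of each vertex to the left (resp. right) child of its image. Equivalently, for every vertex $(r,t,s)$ of $\mathrm{F}\mathbb T$, the vertex of $\mathrm{W}\mathbb T$ at the same position (reached from the root by the same sequence of left/right moves) is $(\omega_r,\omega_t,\omega_s)$.
   Context: Farey tree $\mathrm{F}\mathbb T$: rooted planar binary tree with root $(\frac01,\frac11,\frac10)$, and each vertex $(\frac ab,\frac cd,\frac ef)$ has left child $(\frac ab,\frac{a+c}{b+d},\frac cd)$ and right child $(\frac cd,\frac{c+e}{d+f},\frac ef)$; here $\frac10$ represents $\infty$. Every positive rational occurs exactly once as a middle entry. Word tree $\mathrm{W}\mathbb T$: rooted planar binary tree with vertices in $\mathfrak F_3^3$, root $(x,y,z)$, and a vertex $(a,b,c)$ has left child $(a,bcb^{-1},b)$ and right child $(b,b^{-1}ab,c)$. Modified lattice: the planar graph with vertex set $\mathbb Z^2$ whose edges are the horizontal unit segments $[(i,j),(i+1,j)]$, the vertical unit segments $[(i,j),(i,j+1)]$, and the diagonal segments of slope $-1$ joining $(i,j+1)$ and $(i+1,j)$. Words $\omega_t$: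 set $\omega_{0/1}=x$, $\omega_{1/0}=z$. For a reduced fraction $t=p/q\in(0,\infty)$, let $L_t$ be the segment from $(0,0)$ to $(q,p)$, oriented from $(0,0)$ to $(q,p)$. List the edges of the modified lattice whose relative interior meets $L_t$, in the order of the intersection points along $L_t$. A horizontal (resp. diagonal, vertical) edge contributes the letter $x$ (resp. $y$, $z$) if the midpoint of the edge is not on the right-hand side of the oriented segment $L_t$ (including the case that the midpoint lies on $L_t$), and contributes $x^{-1}$ (resp. $y^{-1}$, $z^{-1}$) if the midpoint is on the right-hand side. The word $\omega_t$ is the concatenation of these letters in order. *)

From mathcomp Require Import all_boot.
Set Implicit Arguments. Unset Strict Implicit. Unset Printing Implicit Defensive.

(* The free group F_3 on {x, y, z}, as freely reduced words.           *)
(* A letter is (g, b) with g : 'I_3 (0 = x, 1 = y, 2 = z) and b = true *)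
(* for the generator, b = false for its inverse.                       *)
Definition letter := ('I_3 * bool)%type.
Definition linv (a : letter) : letter := (a.1, ~~ a.2).

Definition reducedw (w : seq letter) : bool := sorted (fun a b => b != linv a) w.

Definition reduce (w : seq letter) : seq letter :=
  foldr (fun a acc => match acc with
                      | b :: rest => if b == linv a then rest else a :: acc
                      | [::] => [:: a] end) [::] w.

Lemma reduce_reduced w : reducedw (reduce w).
Proof.
elim: w => [|a w IH] //=.
move: IH; case: (reduce w) => [|b rest] //= Hr.
case: ifP => Hb; first exact: path_sorted Hr.
by rewrite /reducedw /= Hb Hr.
Qed.

Definition F3 := {w : seq letter | reducedw w}.
Definition F3_of (w : seq letter) : F3 := exist _ (reduce w) (reduce_reduced w).
Definition F3mul (u v : F3) : F3 := F3_of (proj1_sig u ++ proj1_sig v).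
Definition F3inv (u : F3) : F3 := F3_of (rev (map linv (proj1_sig u))).

Definition gx : F3 := F3_of [:: (@Ordinal 3 0 isT, true)].
Definition gy : F3 := F3_of [:: (@Ordinal 3 1 isT, true)].
Definition gz : F3 := F3_of [:: (@Ordinal 3 2 isT, true)].

(* Positions in a rooted planar binary tree: sequences of moves from   *)
(* the root, false = left child, true = right child.                   *)

(* Farey tree.  A fraction a/b is the pair (a, b); 1/0 stands for oo.  *)
Definition frac := (nat * nat)%type.
Definition fvertex := (frac * frac * frac)%type.
Definition fadd (r s : frac) : frac := (r.1 + s.1, r.2 + s.2)%N.
Definition farey_root : fvertex := ((0, 1), (1, 1), (1, 0))%N.
Definition fleft (v : fvertex) : fvertex :=
  let: (r, t, s) := v in (r, fadd r t, t).
Definition fright (v : fvertex) : fvertex :=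
  let: (r, t, s) := v in (t, fadd t s, s).
Definition fchild (v : fvertex) (m : bool) : fvertex :=
  if m then fright v else fleft v.
Definition farey_at (mv : seq bool) : fvertex := foldl fchild farey_root mv.

Definition wvertex := (F3 * F3 * F3)%type.
Definition word_root : wvertex := (gx, gy, gz).
Definition wleft (v : wvertex) : wvertex :=
  let: (a, b, c) := v in (a, F3mul (F3mul b c) (F3inv b), b).
Definition wright (v : wvertex) : wvertex :=
  let: (a, b, c) := v in (b, F3mul (F3mul (F3inv b) a) b, c).
Definition wchild (v : wvertex) (m : bool) : wvertex :=
  if m then wright v else wleft v.
Definition word_at (mv : seq bool) : wvertex := foldl wchild word_root mv.

(* The words omega_t.  For coprime p, q > 0, L is the segment from     *)
(* (0,0) to (q,p), parametrised as s |-> (q s, p s), s in [0,1].       *)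
(* Each crossed edge is recorded as (num, den, letter) where num/den is *)
(* the parameter s of the intersection point.                          *)
(*  - horizontal edge [(i,j),(i+1,j)]: meets L in its relative interior *)
(*    iff p i < q j < p (i+1); parameter j/p; midpoint (i+1/2, j) is    *)
(*    strictly right of L iff q(2j) < p(2i+1).                          *)
(*  - vertical edge [(i,j),(i,j+1)]: iff q j < p i < q (j+1);           *)
(*    parameter i/q; midpoint (i, j+1/2) right iff q(2j+1) < p(2i).     *)
(*  - diagonal edge [(i,j+1),(i+1,j)]: iff                              *)
(*    (p+q) i < q (i+j+1) < (p+q)(i+1); parameter (i+j+1)/(p+q);        *)
(*    midpoint (i+1/2, j+1/2) right iff q(2j+1) < p(2i+1).              *)
(* A point of L is on the right of the oriented L iff q*Y - p*X < 0.   *)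
(* Ranges: horizontal 0<=i<q, 0<=j<=p; vertical 0<=i<=q, 0<=j<p;      *)
(* diagonal 0<=i<q, 0<=j<p (any edge meeting L lies in [0,q]x[0,p]).  *)
Definition crossing := (nat * nat * letter)%type.

Definition mkletter (g : 'I_3) (notright : bool) : letter := (g, notright).

Definition horiz_crossings (p q : nat) : seq crossing :=
  flatten [seq [seq (j, p, mkletter (@Ordinal 3 0 isT) (p * (2 * i + 1) <= q * (2 * j)))
  | i <- iota 0 q & (p * i < q * j < p * i.+1)] | j <- iota 0 p.+1]%N.

Definition vert_crossings (p q : nat) : seq crossing :=
  flatten [seq [seq (i, q, mkletter (@Ordinal 3 2 isT) (p * (2 * i) <= q * (2 * j + 1)))
  | i <- iota 0 q.+1 & (q * j < p * i < q * j.+1)] | j <- iota 0 p]%N.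

Definition diag_crossings (p q : nat) : seq crossing :=
  flatten [seq [seq (i + j + 1, p + q, mkletter (@Ordinal 3 1 isT) (p * (2 * i + 1) <= q * (2 * j + 1)))
  | i <- iota 0 q & ((p + q) * i < q * (i + j + 1) < (p + q) * i.+1)] | j <- iota 0 p]%N.

(* order along L: by the parameter num/den *)
Definition cross_le (c1 c2 : crossing) : bool :=
  (c1.1.1 * c2.1.2 <= c2.1.1 * c1.1.2)%N.

Definition omega_word (p q : nat) : seq letter :=
  map (fun c : crossing => c.2)
      (sort cross_le (horiz_crossings p q ++ diag_crossings p q ++ vert_crossings p q)).

Definition omega (t : frac) : F3 :=
  let g := gcdn t.1 t.2 in
  let p := (t.1 %/ g)%N in
  let q := (t.2 %/ g)%N in
  if q == 0%N then gz else if p == 0%N then gx else F3_of (omega_word p q).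

Definition Phi (v : fvertex) : wvertex :=
  let: (r, t, s) := v in (omega r, omega t, omega s).

From mathcomp Require Import all_boot.
From mathcomp Require Import zify.
Set Implicit Arguments. Unset Strict Implicit. Unset Printing Implicit Defensive.

(* Both trees are generated by two shears acting on whole vertices.  Below the left
   (right) child of the root, the Farey tree is the image of the whole tree under
   t |-> t / (1 + t) (resp. t |-> 1 + t), and the word tree is the image of the whole
   tree under the endomorphism (x, y, z) |-> (x, y z y^-1, y) (resp. (y, y^-1 x y, z))
   of F_3, because such endomorphisms commute with the child maps.  By induction on
   the position it thus suffices that omega_{p/(p+q)} and omega_{(p+q)/q} are the
   images of omega_{p/q} under these two endomorphisms.
   For coprime p, q > 0 the segment L runs through a staircase of p + q - 1 unit
   squares, crossing the diagonal of each one and, between consecutive squares, a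
   vertical or a horizontal edge; as L meets no lattice point in between, this walk
   lists all crossed edges in order.  The shear (X, Y) |-> (X + Y, Y) (resp.
   (X, X + Y)) carries each square of the walk for p/q onto two consecutive squares
   of the walk for p/(p+q) (resp. (p+q)/q), and comparing letters square by square
   shows that the two words agree up to cancelling pairs y y^-1. *)

(** * Free reduction *)

Definition push (a : letter) (w : seq letter) : seq letter :=
  if w is b :: w' then if b == linv a then w' else a :: w else [:: a].

Lemma reduce_cons a w : reduce (a :: w) = push a (reduce w).
Proof. by []. Qed.

Lemma linvK : involutive linv.
Proof. by case=> g b; rewrite /linv negbK. Qed.

Lemma push_reduced a w : reducedw w -> reducedw (push a w).
Proof.
case: w => [|b w] //= w_red; case: ifP => [_|ba]; first exact: path_sorted w_red.
by rewrite /reducedw /= ba.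
Qed.

Lemma push_linvK a w : reducedw w -> push (linv a) (push a w) = w.
Proof.
case: w => [|b w] /=; first by rewrite linvK eqxx.
case: eqP => [-> | _] /=; last by rewrite linvK eqxx.
by case: w => [|c w] //= /andP[/negPf ca _]; rewrite ca.
Qed.

Lemma reducedw_reduce w : reducedw w -> reduce w = w.
Proof.
elim: w => [|a w IHw] //= aw_red; rewrite IHw; last exact: path_sorted aw_red.
by case: w aw_red {IHw} => [|b w] //= /andP[/negPf-> _].
Qed.

Lemma reduceK w : reduce (reduce w) = reduce w.
Proof. exact/reducedw_reduce/reduce_reduced. Qed.

Lemma foldr_push_reduce acc u : reducedw acc ->
  foldr push acc (reduce u) = foldr push acc u.
Proof.
move=> acc_red; elim: u => [|a u IHu] //=; rewrite -IHu -/(push a (reduce u)).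
have: reducedw (foldr push acc (behead (reduce u))).
  by elim: (behead _) => //= b w; apply: push_reduced.
case: (reduce u) => [|b w] //= w_red; case: eqP => [-> | _] //=.
by rewrite -{1}(linvK a) push_linvK.
Qed.

Lemma reduce_catl u v : reduce (u ++ v) = reduce (reduce u ++ v).
Proof.
by rewrite /reduce !foldr_cat -/(reduce v) foldr_push_reduce ?reduce_reduced.
Qed.

Lemma reduce_catr u v : reduce (u ++ v) = reduce (u ++ reduce v).
Proof. by rewrite /reduce !foldr_cat -/(reduce v) -/(reduce (reduce v)) reduceK. Qed.

Lemma reduce_cons_congr a v w : reduce v = reduce w -> reduce (a :: v) = reduce (a :: w).
Proof. by rewrite !reduce_cons => ->. Qed.

Lemma reduce_cancel a w : reduce (a :: linv a :: w) = reduce w.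
Proof. by rewrite !reduce_cons -{1}(linvK a) push_linvK ?reduce_reduced. Qed.

Lemma F3_of_eq u v : reduce u = reduce v -> F3_of u = F3_of v.
Proof. by move=> uv; apply: val_inj. Qed.

(** * Substitution endomorphisms of F_3 *)

Definition winv (w : seq letter) : seq letter := rev (map linv w).

Lemma winv_cons a w : winv (a :: w) = winv w ++ [:: linv a].
Proof. by rewrite /winv /= rev_cons cats1. Qed.

Lemma winv_cat u v : winv (u ++ v) = winv v ++ winv u.
Proof. by rewrite /winv map_cat rev_cat. Qed.

Lemma winvK : involutive winv.
Proof. by move=> w; rewrite /winv map_rev revK -map_comp (eq_map linvK) map_id. Qed.

Lemma reduce_winv w : reduce (winv (reduce w)) = reduce (winv w).
Proof.
elim: w => [|a w IHw] //; rewrite reduce_cons !winv_cons reduce_catl -IHw -reduce_catl.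
case: (reduce w) => [|b w'] //=; case: eqP => [-> | _]; last by rewrite winv_cons.
by rewrite winv_cons -catA /= linvK reduce_catr reduce_cancel cats0.
Qed.

Definition subst_letter (img : 'I_3 -> seq letter) (a : letter) : seq letter :=
  if a.2 then img a.1 else winv (img a.1).

Definition wsubst img (w : seq letter) : seq letter :=
  flatten (map (subst_letter img) w).

Lemma wsubst_cons img a w : wsubst img (a :: w) = subst_letter img a ++ wsubst img w.
Proof. by []. Qed.

Lemma wsubst_cat img u v : wsubst img (u ++ v) = wsubst img u ++ wsubst img v.
Proof. by rewrite /wsubst map_cat flatten_cat. Qed.

Lemma subst_letter_linv img a :
  subst_letter img (linv a) = winv (subst_letter img a).
Proof. by case: a => g []; rewrite /subst_letter /= ?winvK. Qed.

Lemma wsubst_winv img w : wsubst img (winv w) = winv (wsubst img w).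
Proof.
elim: w => [|a w IHw] //.
by rewrite winv_cons wsubst_cat IHw winv_cat /wsubst /= cats0 subst_letter_linv.
Qed.

Lemma reduce_cat_winv u v : reduce (u ++ winv u ++ v) = reduce v.
Proof.
elim: u v => [|a u IHu] v //.
by rewrite winv_cons -catA cat_cons reduce_cons IHu -reduce_cons reduce_cancel.
Qed.

Lemma reduce_wsubst img w : reduce (wsubst img (reduce w)) = reduce (wsubst img w).
Proof.
elim: w => [|a w IHw] //.
rewrite reduce_cons !wsubst_cons reduce_catr -IHw -reduce_catr.
case: (reduce w) => [|b w'] //=; case: eqP => [-> | _] //.
by rewrite wsubst_cons subst_letter_linv reduce_cat_winv.
Qed.

Definition F3subst img (u : F3) : F3 := F3_of (wsubst img (val u)).

Lemma F3subst_of img w : F3subst img (F3_of w) = F3_of (wsubst img w).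
Proof. by apply: F3_of_eq; rewrite reduce_wsubst. Qed.

Lemma F3subst_mul img u v :
  F3subst img (F3mul u v) = F3mul (F3subst img u) (F3subst img v).
Proof.
rewrite F3subst_of; apply: F3_of_eq => /=.
by rewrite wsubst_cat reduce_catl reduce_catr.
Qed.

Lemma F3subst_inv img u : F3subst img (F3inv u) = F3inv (F3subst img u).
Proof.
rewrite F3subst_of; apply: F3_of_eq => /=.
by rewrite -/(winv _) -/(winv _) wsubst_winv reduce_winv.
Qed.

(** * The walk of L through the unit squares *)

Section Grid.
Variables (T : eqType) (f : nat -> nat -> T) (P : nat -> nat -> bool).

Definition grid (r s : seq nat) : seq T :=
  flatten [seq [seq f i j | i <- r & P i j] | j <- s].

Lemma mem_grid r s c :
  reflect (exists i j, [/\ i \in r, j \in s, P i j & c = f i j]) (c \in grid r s).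
Proof.
apply: (iffP flatten_mapP) => [[j js /mapP[i]] | [i [j [ir js Pij ->]]]].
  by rewrite mem_filter => /andP[Pij ir] ->; exists i, j.
by exists j => //; apply: map_f; rewrite mem_filter Pij.
Qed.

Lemma grid_uniq r s : uniq r -> uniq s ->
  (forall i j i' j', P i j -> P i' j' -> f i j = f i' j' -> i = i' /\ j = j') ->
  uniq (grid r s).
Proof.
move=> r_uniq + f_inj; elim: s => [|j s IHs] //= /andP[js s_uniq].
rewrite cat_uniq IHs // andbT; apply/andP; split.
  rewrite map_inj_in_uniq ?filter_uniq // => i i'.
  by rewrite !mem_filter => /andP[Pij _] /andP[Pi'j _] /(f_inj _ _ _ _ Pij Pi'j)[].
apply/hasPn => c /mem_grid[i' [j' [_ j's Pij' ->]]]; apply/mapP => -[i].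
rewrite mem_filter => /andP[Pij _] /(f_inj _ _ _ _ Pij' Pij)[_ eq_j].
by move: js; rewrite -eq_j j's.
Qed.

End Grid.

Lemma pairwise_total (T : eqType) (r : rel T) s : pairwise r s ->
  {in s &, forall x y, x != y -> r x y || r y x}.
Proof.
elim: s => [|a s IHs] //; rewrite pairwise_cons => /andP[/allP r_a r_s] x y.
rewrite !inE => /predU1P[-> | xs] /predU1P[-> | ys]; rewrite ?eqxx //.
- by move=> _; rewrite r_a.
- by move=> _; rewrite r_a ?orbT.
- exact: IHs.
Qed.

Definition gen_x : 'I_3 := @Ordinal 3 0 isT.
Definition gen_y : 'I_3 := @Ordinal 3 1 isT.
Definition gen_z : 'I_3 := @Ordinal 3 2 isT.

Definition cross_lt (c d : crossing) := c.1.1 * d.1.2 < d.1.1 * c.1.2.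

Section Walk.
Variables p q : nat.

(* Cell (i, j) is the unit square [i, i + 1] x [j, j + 1]; L goes from (0, 0) to (q, p). *)
Definition crossed_cell i j :=
  [&& i < q, j < p, p * i < q * (j + 1) & q * j < p * (i + 1)].

Definition moves_right i j := p * (i + 1) < q * (j + 1).

Definition diag_crossing i j : crossing :=
  (i + j + 1, p + q, (gen_y, p * (2 * i + 1) <= q * (2 * j + 1))).
Definition vert_crossing i j : crossing :=
  (i, q, (gen_z, p * (2 * i) <= q * (2 * j + 1))).
Definition horiz_crossing i j : crossing :=
  (j, p, (gen_x, p * (2 * i + 1) <= q * (2 * j))).

Definition exit_crossing i j :=
  if moves_right i j then vert_crossing (i + 1) j else horiz_crossing i (j + 1).

(* The crossings met by L from cell (i, j) on, through n further cells. *)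
Fixpoint walk n i j : seq crossing :=
  diag_crossing i j :: if n is n'.+1 then
    exit_crossing i j :: if moves_right i j then walk n' (i + 1) j else walk n' i (j + 1)
  else [::].

Lemma path_walk (r : rel crossing) c n i j :
  path r c (walk n i j) = r c (diag_crossing i j) && sorted r (walk n i j).
Proof. by case: n. Qed.

Definition walk_word n i j : seq letter := [seq c.2 | c <- walk n i j].

Definition cell_crossing i j c :=
  c = diag_crossing i j \/ i + j < p + q - 2 /\ c = exit_crossing i j.

Definition crossings := horiz_crossings p q ++ diag_crossings p q ++ vert_crossings p q.

Lemma horiz_crossingsE : horiz_crossings p q =
  grid (fun i j => horiz_crossing i j) (fun i j => p * i < q * j < p * i.+1)
       (iota 0 q) (iota 0 p.+1).
Proof. by []. Qed.

Lemma diag_crossingsE : diag_crossings p q =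
  grid (fun i j => diag_crossing i j)
       (fun i j => (p + q) * i < q * (i + j + 1) < (p + q) * i.+1) (iota 0 q) (iota 0 p).
Proof. by []. Qed.

Lemma vert_crossingsE : vert_crossings p q =
  grid (fun i j => vert_crossing i j) (fun i j => q * j < p * i < q * j.+1)
       (iota 0 q.+1) (iota 0 p).
Proof. by []. Qed.

Lemma crossed_cell_ge_next i0 j0 i j : crossed_cell i0 j0 -> crossed_cell i j ->
  i0 <= i -> j0 <= j -> (i, j) != (i0, j0) ->
  if moves_right i0 j0 then i0 < i else j0 < j.
Proof.
rewrite /moves_right xpair_eqE negb_and => /and4P[? ? ? ?] /and4P[? ? ? ?] le_i le_j.
by case: ifP => right; nia.
Qed.

Hypotheses (p_gt0 : 0 < p) (q_gt0 : 0 < q).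

Lemma crossed_cell00 : crossed_cell 0 0.
Proof. by rewrite /crossed_cell; lia. Qed.

Lemma walk_den_gt0 n i j : all (fun c : crossing => 0 < c.1.2) (walk n i j).
Proof.
elim: n i j => [|n IHn] i j /=; rewrite addn_gt0 p_gt0 //.
by rewrite /exit_crossing; case: ifP => _; rewrite /= ?p_gt0 ?q_gt0 IHn.
Qed.

Lemma crossings_uniq : uniq crossings.
Proof.
have gen_disjoint (s t : seq crossing) g g' : g != g' ->
    all (fun c => c.2.1 == g) s -> all (fun c => c.2.1 == g') t -> ~~ has (mem s) t.
  move=> neq_g /allP s_g /allP t_g; apply/hasPn => c /t_g/eqP c_g'.
  by apply/negP => /s_g; rewrite c_g' eq_sym (negPf neq_g).
have gen_h : all (fun c => c.2.1 == gen_x) (horiz_crossings p q).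
  by apply/allP => c; rewrite horiz_crossingsE => /mem_grid[i [j [_ _ _ ->]]].
have gen_d : all (fun c => c.2.1 == gen_y) (diag_crossings p q).
  by apply/allP => c; rewrite diag_crossingsE => /mem_grid[i [j [_ _ _ ->]]].
have gen_v : all (fun c => c.2.1 == gen_z) (vert_crossings p q).
  by apply/allP => c; rewrite vert_crossingsE => /mem_grid[i [j [_ _ _ ->]]].
have uniq_h : uniq (horiz_crossings p q).
  rewrite horiz_crossingsE; apply: grid_uniq; rewrite ?iota_uniq //.
  by move=> i j i' j' /andP[? ?] /andP[? ?] [eq_j _]; nia.
have uniq_d : uniq (diag_crossings p q).
  rewrite diag_crossingsE; apply: grid_uniq; rewrite ?iota_uniq //.
  by move=> i j i' j' /andP[? ?] /andP[? ?] [eq_ij _]; nia.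
have uniq_v : uniq (vert_crossings p q).
  rewrite vert_crossingsE; apply: grid_uniq; rewrite ?iota_uniq //.
  by move=> i j i' j' /andP[? ?] /andP[? ?] [eq_i _]; nia.
rewrite /crossings cat_uniq (cat_uniq (diag_crossings p q)) has_cat negb_or.
apply/and5P; split=> //; first apply/andP; try split.
- exact: gen_disjoint gen_h gen_d.
- exact: gen_disjoint gen_h gen_v.
- exact: gen_disjoint gen_d gen_v.
Qed.

Hypothesis pq_coprime : coprime p q.

Lemma line_avoids_corner i j : crossed_cell i j -> i + j < p + q - 2 ->
  p * (i + 1) != q * (j + 1).
Proof.
case/and4P=> iq jp _ _ ij_lt; apply/eqP => corner.
have: q %| p * (i + 1) by rewrite corner dvdn_mulr.
rewrite Gauss_dvdr 1?coprime_sym // addn1 => /dvdn_leq q_le.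
have eq_i : i + 1 = q by lia.
by move: corner; rewrite eq_i; nia.
Qed.

Lemma crossed_cell_next i j : crossed_cell i j -> i + j < p + q - 2 ->
  if moves_right i j then crossed_cell (i + 1) j else crossed_cell i (j + 1).
Proof.
move=> cij ij_lt; have := line_avoids_corner cij ij_lt; move: cij.
rewrite /moves_right /crossed_cell => /and4P[iq jp lo hi] ncorner.
case: ifP => right; apply/and4P; split; nia.
Qed.

Lemma mem_crossings c :
  c \in crossings <-> exists i j, crossed_cell i j /\ cell_crossing i j c.
Proof.
rewrite (mem_cat c (horiz_crossings p q)) (mem_cat c (diag_crossings p q)).
rewrite horiz_crossingsE diag_crossingsE vert_crossingsE; split.
  case/or3P=> [/mem_grid[i [[|j] [ir js P ->]]] | /mem_grid[i [j [ir js P ->]]]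
              | /mem_grid[[|i] [j [ir js P ->]]]]; rewrite ?mem_iota in ir js.
  - by lia.
  - exists i, j; split; first by rewrite /crossed_cell; nia.
    right; split; first by nia.
    by rewrite /exit_crossing /moves_right ifN ?addn1 //; nia.
  - by exists i, j; split; [rewrite /crossed_cell; nia | left].
  - by lia.
  - exists i, j; split; first by rewrite /crossed_cell; nia.
    right; split; first by nia.
    by rewrite /exit_crossing /moves_right ifT ?addn1 //; nia.
move=> [i [j [cij [-> | [ij_lt ->]]]]].
  apply/or3P/Or32/mem_grid; exists i, j; rewrite !mem_iota.
  by split=> //; case/and4P: cij; nia.
have := line_avoids_corner cij ij_lt; move: cij => /and4P[iq jp lo hi] ncorner.
rewrite /exit_crossing /moves_right; case: ifP => right.
  by apply/or3P/Or33/mem_grid; exists (i + 1), j; rewrite !mem_iota; split=> //; nia.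
by apply/or3P/Or31/mem_grid; exists i, (j + 1); rewrite !mem_iota; split=> //; nia.
Qed.

Lemma mem_walk n i0 j0 c : crossed_cell i0 j0 -> i0 + j0 + n = p + q - 2 ->
  c \in walk n i0 j0 <->
  exists i j, [/\ i0 <= i, j0 <= j, crossed_cell i j & cell_crossing i j c].
Proof.
elim: n i0 j0 => [|n IHn] i0 j0 c0 n_eq.
  rewrite inE; split=> [/eqP-> | [i [j [le_i le_j cij c_ij]]]].
    by exists i0, j0; split=> //; left.
  have [ei ej] : i = i0 /\ j = j0 by case/and4P: cij; lia.
  by move: c_ij; rewrite ei ej => -[-> | []]; [rewrite eqxx | lia].
have lt_n : i0 + j0 < p + q - 2 by lia.
rewrite /= in_cons [c \in _ :: _]in_cons.
move: (crossed_cell_next c0 lt_n) (@crossed_cell_ge_next i0 j0).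
case: ifP => right c1 next_min; (have walkP := IHn _ _ c1 ltac:(lia);
  split=> [/or3P[/eqP-> | /eqP-> | /walkP[i [j [le_i le_j cij c_ij]]]]
          | [i [j [le_i le_j cij c_ij]]]];
  [ by exists i0, j0; split=> //; left
  | by exists i0, j0; split=> //; right
  | by exists i, j; split=> //; lia
  | case: (eqVneq (i, j) (i0, j0)) => [[ei ej] | neq] ]).
all: try by move: c_ij; rewrite ei ej => -[-> | [_ ->]]; rewrite eqxx ?orbT.
all: have := next_min i j c0 cij le_i le_j neq => lt_next.
all: by apply/or3P/Or33/walkP; exists i, j; split=> //; lia.
Qed.

Lemma walk_crossings : walk (p + q - 2) 0 0 =i crossings.
Proof.
move=> c; have walkP := mem_walk c crossed_cell00 (erefl (p + q - 2)).
apply/idP/idP => [/walkP[i [j [_ _ cij c_ij]]] | /mem_crossings[i [j [cij c_ij]]]].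
  by apply/mem_crossings; exists i, j.
by apply/walkP; exists i, j.
Qed.

Lemma walk_sorted n i j : crossed_cell i j -> i + j + n = p + q - 2 ->
  sorted cross_lt (walk n i j).
Proof.
elim: n i j => [|n IHn] i j // cij n_eq.
have lt_n : i + j < p + q - 2 by lia.
have := line_avoids_corner cij lt_n; move: (crossed_cell_next cij lt_n).
rewrite /= /exit_crossing; case: ifP => right c1 ncorner; rewrite path_walk IHn //; try lia.
all: rewrite /cross_lt /= andbT; move: cij c1 right => /and4P[? ? ? ?] /and4P[? ? ? ?].
all: by rewrite /moves_right; nia.
Qed.

Lemma omega_word_walk : omega_word p q = walk_word (p + q - 2) 0 0.
Proof.
rewrite /omega_word /walk_word; congr map; set w := walk _ 0 0.
have w_sorted : sorted cross_lt w := walk_sorted crossed_cell00 (erefl _).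
have den_gt0 := walk_den_gt0 (p + q - 2) 0 0.
have lt_trans : {in [pred c : crossing | 0 < c.1.2] & &, transitive cross_lt}.
  by move=> d c e; rewrite !inE /cross_lt; nia.
have le_trans : {in [pred c : crossing | 0 < c.1.2] & &, transitive cross_le}.
  by move=> d c e; rewrite !inE /cross_le; nia.
have w_pairwise : pairwise cross_lt w by rewrite -(sorted_pairwise_in lt_trans).
have w_uniq : uniq w by apply: pairwise_uniq w_pairwise => c; rewrite /cross_lt ltnn.
have w_perm : perm_eq w crossings.
  by apply: uniq_perm w_uniq crossings_uniq walk_crossings.
have <- : sort cross_le w = sort cross_le crossings.
  apply/perm_sort_inP => //; first by move=> c d _ _; apply: leq_total.
    by move=> d c e dw cw ew; apply: le_trans; apply: (allP den_gt0).
  move=> c d cw dw /andP[cd dc]; apply: contraTeq isT => neq_cd.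
  have := pairwise_total w_pairwise cw dw neq_cd.
  by move: cd dc; rewrite /cross_le /cross_lt; lia.
apply: (sorted_sort_in le_trans den_gt0).
by apply: sub_sorted w_sorted => c d; apply: ltnW.
Qed.

End Walk.

(** * Shearing the walk *)

Lemma walk_word0 p q i j :
  walk_word p q 0 i j = [:: (gen_y, p * (2 * i + 1) <= q * (2 * j + 1))].
Proof. by []. Qed.

Lemma walk_wordS p q n i j : walk_word p q n.+1 i j =
  (gen_y, p * (2 * i + 1) <= q * (2 * j + 1)) ::
  if moves_right p q i j
  then (gen_z, p * (2 * (i + 1)) <= q * (2 * j + 1)) :: walk_word p q n (i + 1) j
  else (gen_x, p * (2 * i + 1) <= q * (2 * (j + 1))) :: walk_word p q n i (j + 1).
Proof. by rewrite /walk_word /= /exit_crossing; case: ifP. Qed.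

Lemma reduce_cancel_y b w : reduce ((gen_y, b) :: (gen_y, ~~ b) :: w) = reduce w.
Proof. exact: (reduce_cancel (gen_y, b)). Qed.

Lemma reduce_swap_y b b' w :
  reduce ((gen_y, b) :: (gen_y, b') :: w) = reduce ((gen_y, b') :: (gen_y, b) :: w).
Proof. by case: b b' => -[]; rewrite ?reduce_cancel_y. Qed.

Definition shearL_img (g : 'I_3) : seq letter :=
  match val g with
  | 0 => [:: (gen_x, true)]
  | 1 => [:: (gen_y, true); (gen_z, true); (gen_y, false)]
  | _ => [:: (gen_y, true)]
  end.

Definition shearR_img (g : 'I_3) : seq letter :=
  match val g with
  | 0 => [:: (gen_y, true)]
  | 1 => [:: (gen_y, false); (gen_x, true); (gen_y, true)]
  | _ => [:: (gen_z, true)]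
  end.

Lemma wsubst_shearL_x b w :
  wsubst shearL_img ((gen_x, b) :: w) = (gen_x, b) :: wsubst shearL_img w.
Proof. by case: b. Qed.

Lemma wsubst_shearL_y b w : wsubst shearL_img ((gen_y, b) :: w) =
  [:: (gen_y, true), (gen_z, b), (gen_y, false) & wsubst shearL_img w].
Proof. by case: b. Qed.

Lemma wsubst_shearL_z b w :
  wsubst shearL_img ((gen_z, b) :: w) = (gen_y, b) :: wsubst shearL_img w.
Proof. by case: b. Qed.

Lemma wsubst_shearR_x b w :
  wsubst shearR_img ((gen_x, b) :: w) = (gen_y, b) :: wsubst shearR_img w.
Proof. by case: b. Qed.

Lemma wsubst_shearR_y b w : wsubst shearR_img ((gen_y, b) :: w) =
  [:: (gen_y, false), (gen_x, b), (gen_y, true) & wsubst shearR_img w].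
Proof. by case: b. Qed.

Lemma wsubst_shearR_z b w :
  wsubst shearR_img ((gen_z, b) :: w) = (gen_z, b) :: wsubst shearR_img w.
Proof. by case: b. Qed.

Section ShearSigns.
Variables p q : nat.

Lemma shearL_moves_right i j : moves_right p (p + q) (i + j) j = (p * i < q * (j + 1)).
Proof. by rewrite /moves_right; apply/idP/idP; lia. Qed.

Lemma shearL_moves_right_next i j :
  moves_right p (p + q) (i + j + 1) j = moves_right p q i j.
Proof. by rewrite /moves_right; apply/idP/idP; lia. Qed.

Lemma shearL_diag_sign i j : (p * (2 * (i + j) + 1) <= (p + q) * (2 * j + 1))
                             = (p * (2 * i) <= q * (2 * j + 1)).
Proof. by apply/idP/idP; lia. Qed.

Lemma shearL_diag_sign_next i j : (p * (2 * (i + j + 1) + 1) <= (p + q) * (2 * j + 1))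
                                  = (p * (2 * (i + 1)) <= q * (2 * j + 1)).
Proof. by apply/idP/idP; lia. Qed.

Lemma shearL_vert_sign i j : (p * (2 * (i + j + 1)) <= (p + q) * (2 * j + 1))
                             = (p * (2 * i + 1) <= q * (2 * j + 1)).
Proof. by apply/idP/idP; lia. Qed.

Lemma shearL_horiz_sign i j : (p * (2 * (i + j + 1) + 1) <= (p + q) * (2 * (j + 1)))
                              = (p * (2 * i + 1) <= q * (2 * (j + 1))).
Proof. by apply/idP/idP; lia. Qed.

Lemma shearR_moves_right i j : moves_right (p + q) q i (i + j) = (p * (i + 1) < q * j).
Proof. by rewrite /moves_right; apply/idP/idP; lia. Qed.

Lemma shearR_moves_right_next i j :
  moves_right (p + q) q i (i + j + 1) = moves_right p q i j.
Proof. by rewrite /moves_right; apply/idP/idP; lia. Qed.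

Lemma shearR_diag_sign i j : ((p + q) * (2 * i + 1) <= q * (2 * (i + j) + 1))
                             = (p * (2 * i + 1) <= q * (2 * j)).
Proof. by apply/idP/idP; lia. Qed.

Lemma shearR_diag_sign_next i j : ((p + q) * (2 * i + 1) <= q * (2 * (i + j + 1) + 1))
                                  = (p * (2 * i + 1) <= q * (2 * (j + 1))).
Proof. by apply/idP/idP; lia. Qed.

Lemma shearR_horiz_sign i j : ((p + q) * (2 * i + 1) <= q * (2 * (i + j + 1)))
                              = (p * (2 * i + 1) <= q * (2 * j + 1)).
Proof. by apply/idP/idP; lia. Qed.

Lemma shearR_vert_sign i j : ((p + q) * (2 * (i + 1)) <= q * (2 * (i + j + 1) + 1))
                             = (p * (2 * (i + 1)) <= q * (2 * j + 1)).
Proof. by apply/idP/idP; lia. Qed.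

End ShearSigns.

Section Shear.
Variables p q : nat.
Hypotheses (p_gt0 : 0 < p) (q_gt0 : 0 < q) (pq_coprime : coprime p q).

(* The shear (X, Y) |-> (X + Y, Y) maps cell (i, j) for p/q onto the cells (i + j, j)
   and (i + j + 1, j) for p/(p + q); n and m count the cells left on either walk. *)
Lemma walk_word_shearL n i j m : crossed_cell p q i j ->
  i + j + n = p + q - 2 -> m + i + 2 * j = 2 * p + q - 2 ->
  reduce (walk_word p (p + q) m (i + j) j) =
  reduce ((gen_y, p * (2 * i) <= q * (2 * j + 1)) :: (gen_y, false)
          :: wsubst shearL_img (walk_word p q n i j)).
Proof.
elim: n i j m => [|n IHn] i j m cij n_eq m_eq;
  case/and4P: (cij) => iq jp i_lo j_lo; (case: m m_eq => [|m] m_eq; first by lia);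
  rewrite walk_wordS shearL_moves_right i_lo shearL_diag_sign shearL_vert_sign.
  have [ei ej] : i + 1 = q /\ j + 1 = p by lia.
  have -> : m = 0 by lia.
  rewrite !walk_word0 wsubst_shearL_y shearL_diag_sign_next.
  have -> : (p * (2 * (i + 1)) <= q * (2 * j + 1)) = false.
    by apply/negbTE; rewrite -ltnNge ei; nia.
  by apply: reduce_cons_congr; rewrite reduce_cancel_y.
have lt_n : i + j < p + q - 2 by lia.
move: (crossed_cell_next p_gt0 q_gt0 pq_coprime cij lt_n).
rewrite walk_wordS wsubst_shearL_y; case: ifP => right c1.
  rewrite wsubst_shearL_z -(addnAC i 1 j).
  apply: reduce_cons_congr; rewrite reduce_cancel_y; apply: reduce_cons_congr.
  by rewrite IHn //; try lia; apply: reduce_swap_y.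
case: m m_eq => [|m] m_eq; first by lia.
rewrite walk_wordS shearL_moves_right_next right wsubst_shearL_x shearL_horiz_sign.
have -> : (p * (2 * (i + j + 1) + 1) <= (p + q) * (2 * j + 1)) = false.
  by rewrite shearL_diag_sign_next; move: right; rewrite /moves_right; lia.
apply: reduce_cons_congr; rewrite reduce_cancel_y; do 3![apply: reduce_cons_congr].
have y_sign : p * (2 * i) <= q * (2 * (j + 1) + 1) by lia.
by rewrite -[i + j + 1]addnA IHn //; try lia; rewrite y_sign reduce_cancel_y.
Qed.

(* The shear (X, Y) |-> (X, X + Y) maps cell (i, j) for p/q onto the cells (i, i + j)
   and (i, i + j + 1) for (p + q)/q. *)
Lemma walk_word_shearR n i j m : crossed_cell p q i j ->
  i + j + n = p + q - 2 -> m + 2 * i + j = p + 2 * q - 2 ->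
  reduce (walk_word (p + q) q m i (i + j)) =
  reduce ((gen_y, p * (2 * i + 1) <= q * (2 * j)) :: (gen_y, true)
          :: wsubst shearR_img (walk_word p q n i j)).
Proof.
elim: n i j m => [|n IHn] i j m cij n_eq m_eq;
  case/and4P: (cij) => iq jp i_lo j_lo; (case: m m_eq => [|m] m_eq; first by lia);
  rewrite walk_wordS shearR_moves_right (leq_gtF (ltnW j_lo));
  rewrite shearR_diag_sign shearR_horiz_sign.
  have [ei ej] : i + 1 = q /\ j + 1 = p by lia.
  have -> : m = 0 by lia.
  rewrite !walk_word0 wsubst_shearR_y shearR_diag_sign_next.
  have -> : (p * (2 * i + 1) <= q * (2 * (j + 1))) = true.
    by apply/idP; rewrite ej; nia.
  by apply: reduce_cons_congr; rewrite reduce_cancel_y.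
have lt_n : i + j < p + q - 2 by lia.
move: (crossed_cell_next p_gt0 q_gt0 pq_coprime cij lt_n).
rewrite walk_wordS wsubst_shearR_y; case: ifP => right c1; last first.
  rewrite wsubst_shearR_x -[i + j + 1]addnA.
  apply: reduce_cons_congr; rewrite reduce_cancel_y; apply: reduce_cons_congr.
  by rewrite IHn //; try lia; apply: reduce_swap_y.
case: m m_eq => [|m] m_eq; first by lia.
rewrite walk_wordS shearR_moves_right_next right wsubst_shearR_z shearR_vert_sign.
have -> : ((p + q) * (2 * i + 1) <= q * (2 * (i + j + 1) + 1)) = true.
  by rewrite shearR_diag_sign_next; move: right; rewrite /moves_right; lia.
apply: reduce_cons_congr; rewrite reduce_cancel_y; do 3![apply: reduce_cons_congr].
have y_sign : (p * (2 * (i + 1) + 1) <= q * (2 * j)) = false by lia.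
by rewrite (addnAC i j 1) IHn //; try lia; rewrite y_sign reduce_cancel_y.
Qed.

End Shear.

Definition omega_coprime (p q : nat) : F3 :=
  if q == 0 then gz else if p == 0 then gx else F3_of (omega_word p q).

Lemma omegaE t : omega t = omega_coprime (t.1 %/ gcdn t.1 t.2) (t.2 %/ gcdn t.1 t.2).
Proof. by []. Qed.

Lemma omega_coprime_shearL p q : coprime p q -> 0 < p + q ->
  omega_coprime p (p + q) = F3subst shearL_img (omega_coprime p q).
Proof.
move=> pq_coprime pq_gt0; have [q0 | q_gt0] := posnP q.
  have -> : p = 1 by move: pq_coprime; rewrite q0 /coprime gcdn0 => /eqP.
  by rewrite q0; apply: val_inj; vm_compute.
have [p0 | p_gt0] := posnP p.
  have -> : q = 1 by move: pq_coprime; rewrite p0 /coprime gcd0n => /eqP.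
  by rewrite p0; apply: val_inj; vm_compute.
rewrite /omega_coprime (gtn_eqF pq_gt0) (gtn_eqF p_gt0) (gtn_eqF q_gt0) F3subst_of.
apply: F3_of_eq; have p_pq_coprime : coprime p (p + q) by rewrite /coprime gcdnDl.
rewrite !omega_word_walk //.
have -> : p + (p + q) - 2 = 2 * p + q - 2 by lia.
rewrite (walk_word_shearL p_gt0 q_gt0 pq_coprime (n := p + q - 2) (m := 2 * p + q - 2)
  (crossed_cell00 p_gt0 q_gt0)) //; try lia.
have -> : (p * (2 * 0) <= q * (2 * 0 + 1)) = true by lia.
by rewrite reduce_cancel_y.
Qed.

Lemma omega_coprime_shearR p q : coprime p q -> 0 < p + q ->
  omega_coprime (p + q) q = F3subst shearR_img (omega_coprime p q).
Proof.
move=> pq_coprime pq_gt0; have [q0 | q_gt0] := posnP q.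
  have -> : p = 1 by move: pq_coprime; rewrite q0 /coprime gcdn0 => /eqP.
  by rewrite q0; apply: val_inj; vm_compute.
have [p0 | p_gt0] := posnP p.
  have -> : q = 1 by move: pq_coprime; rewrite p0 /coprime gcd0n => /eqP.
  by rewrite p0; apply: val_inj; vm_compute.
rewrite /omega_coprime (gtn_eqF pq_gt0) (gtn_eqF p_gt0) (gtn_eqF q_gt0) F3subst_of.
apply: F3_of_eq; have pq_q_coprime : coprime (p + q) q.
  by rewrite /coprime gcdnC gcdnDr gcdnC.
rewrite !omega_word_walk //.
have -> : p + q + q - 2 = p + 2 * q - 2 by lia.
rewrite (walk_word_shearR p_gt0 q_gt0 pq_coprime (n := p + q - 2) (m := p + 2 * q - 2)
  (crossed_cell00 p_gt0 q_gt0)) //; try lia.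
have -> : (p * (2 * 0 + 1) <= q * (2 * 0)) = false by lia.
by rewrite reduce_cancel_y.
Qed.

Lemma coprime_div_gcd m n : 0 < gcdn m n -> coprime (m %/ gcdn m n) (n %/ gcdn m n).
Proof.
move=> g_gt0; rewrite /coprime -(eqn_pmul2r g_gt0) mul1n muln_gcdl.
by rewrite !divnK ?dvdn_gcdl ?dvdn_gcdr.
Qed.

Definition shearL (t : frac) : frac := (t.1, t.1 + t.2).
Definition shearR (t : frac) : frac := (t.1 + t.2, t.2).

Lemma omega_shearL t : 0 < t.1 + t.2 -> omega (shearL t) = F3subst shearL_img (omega t).
Proof.
case: t => a b /= ab_gt0; rewrite !omegaE /= gcdnDl.
have g_gt0 : 0 < gcdn a b by rewrite gcdn_gt0 -addn_gt0.
rewrite divnDl ?dvdn_gcdl //; apply: omega_coprime_shearL; first exact: coprime_div_gcd.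
rewrite -divnDl ?dvdn_gcdl // divn_gt0 // dvdn_leq //.
by rewrite dvdn_addr ?dvdn_gcdl ?dvdn_gcdr.
Qed.

Lemma omega_shearR t : 0 < t.1 + t.2 -> omega (shearR t) = F3subst shearR_img (omega t).
Proof.
case: t => a b /= ab_gt0; rewrite !omegaE /= gcdnC gcdnDr gcdnC.
have g_gt0 : 0 < gcdn a b by rewrite gcdn_gt0 -addn_gt0.
rewrite divnDl ?dvdn_gcdl //; apply: omega_coprime_shearR; first exact: coprime_div_gcd.
rewrite -divnDl ?dvdn_gcdl // divn_gt0 // dvdn_leq //.
by rewrite dvdn_addr ?dvdn_gcdl ?dvdn_gcdr.
Qed.

(** * The Farey tree and the word tree *)

Definition shear (m : bool) : frac -> frac := if m then shearR else shearL.
Definition shear_img (m : bool) : 'I_3 -> seq letter :=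
  if m then shearR_img else shearL_img.

Definition fmap3 (f : frac -> frac) (v : fvertex) : fvertex :=
  let: (r, t, s) := v in (f r, f t, f s).
Definition wsubst3 img (v : wvertex) : wvertex :=
  let: (a, b, c) := v in (F3subst img a, F3subst img b, F3subst img c).

Definition nonzero3 (v : fvertex) : bool :=
  let: (r, t, s) := v in [&& 0 < r.1 + r.2, 0 < t.1 + t.2 & 0 < s.1 + s.2].

Lemma fchild_shear m m' v : fchild (fmap3 (shear m) v) m' = fmap3 (shear m) (fchild v m').
Proof.
case: v => [[[r1 r2] [t1 t2]] [s1 s2]].
by case: m m' => -[]; rewrite /= /fadd /= 1?addnACA.
Qed.

Lemma farey_at_cons m mv : farey_at (m :: mv) = fmap3 (shear m) (farey_at mv).
Proof.
have root_child : fchild farey_root m = fmap3 (shear m) farey_root by case: m.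
rewrite /farey_at /= root_child.
by elim: mv farey_root => [|m' mv IHmv] v //=; rewrite fchild_shear IHmv.
Qed.

Lemma wchild_subst m m' v :
  wchild (wsubst3 (shear_img m) v) m' = wsubst3 (shear_img m) (wchild v m').
Proof. by case: v => [[a b] c]; case: m' => /=; rewrite ?F3subst_mul ?F3subst_inv. Qed.

Lemma word_at_cons m mv : word_at (m :: mv) = wsubst3 (shear_img m) (word_at mv).
Proof.
have root_child : wchild word_root m = wsubst3 (shear_img m) word_root.
  by case: m; congr (_, _, _); apply: val_inj; vm_compute.
rewrite /word_at /= root_child.
by elim: mv word_root => [|m' mv IHmv] v //=; rewrite wchild_subst IHmv.
Qed.

Lemma farey_at_nonzero mv : nonzero3 (farey_at mv).
Proof.
elim: mv => [|m mv] //; rewrite farey_at_cons.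
case: (farey_at mv) => [[[r1 r2] [t1 t2]] [s1 s2]] /=.
by case: m; rewrite /= ?addn_gt0 => /and3P[-> -> ->]; rewrite ?orbT.
Qed.

Lemma Phi_shear m v : nonzero3 v -> Phi (fmap3 (shear m) v) = wsubst3 (shear_img m) (Phi v).
Proof.
by case: v => [[r t] s] /and3P[r0 t0 s0]; case: m; rewrite /= ?omega_shearL ?omega_shearR.
Qed.

Lemma word_at_Phi mv : word_at mv = Phi (farey_at mv).
Proof.
elim: mv => [|m mv IHmv]; first by congr (_, _, _); apply: val_inj; vm_compute.
by rewrite word_at_cons farey_at_cons Phi_shear ?farey_at_nonzero // IHmv.
Qed.

Lemma farey_at_rcons mv m : farey_at (rcons mv m) = fchild (farey_at mv) m.
Proof. exact: foldl_rcons. Qed.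

Lemma word_at_rcons mv m : word_at (rcons mv m) = wchild (word_at mv) m.
Proof. exact: foldl_rcons. Qed.

Lemma Phi_fchild mv m : Phi (fchild (farey_at mv) m) = wchild (Phi (farey_at mv)) m.
Proof. by rewrite -farey_at_rcons -!word_at_Phi word_at_rcons. Qed.

Theorem theorem3p6 :
  (* Phi is a morphism of rooted planar binary trees FT -> WT ... *)
  Phi farey_root = word_root /\
  (forall mv : seq bool,
      Phi (fleft (farey_at mv)) = wleft (Phi (farey_at mv)) /\
      Phi (fright (farey_at mv)) = wright (Phi (farey_at mv))) /\
  (* ... equivalently, vertices at the same position correspond *)
  (forall mv : seq bool, word_at mv = Phi (farey_at mv)).
Proof.
split; first exact: esym (word_at_Phi [::]).
split; last exact: word_at_Phi.
by move=> mv; split; [exact: Phi_fchild mv false | exact: Phi_fchild mv true].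
Qed.
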